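(* Let $0<\alpha\le\beta\le\pi$ and $f:S_\alpha\to S_\beta$, $f(z)=z^{\beta/\alpha}$. Then for all $x,y\in S_\alpha$, $$w_{S_\alpha}(x,y)\le w_{S_\beta}(f(x),f(y))\le\frac{\beta\sin(\alpha/2)}{\alpha\sin(\beta/2)}\,w_{S_\alpha}(x,y),$$ and the constants are sharp.
   Context: For $\theta\in(0,2\pi)$, $S_\theta=\{z\in\mathbb{C}:0<\arg z<\theta\}$ is the open sector; $z^{\beta/\alpha}$ uses the branch with $\arg z\in(0,\alpha)$. For a domain $G$ and $x\in G$, $d_G(x)=\inf\{|x-z|:z\in\partial G\}$; $S^1(x,r)$ is the circle of center $x$ and radius $r$. For convex $G$, $w_G(x,y)=\frac{|x-y|}{\min\{\inf_{\tilde y\in\tilde Y}|x-\tilde y|,\ \inf_{\tilde x\in\tilde X}|y-\tilde x|\}}$ with $\tilde X=\{\tilde x\in S^{1}(x,2d_G(x)):(x+\tilde x)/2\in\partial G\}$ and $\tilde Y=\{\tilde y\in S^{1}(y,2d_G(y)):(y+\tilde y)/2\in\partial G\}$. *)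

From Stdlib Require Import Reals.
From Coquelicot Require Import Coquelicot.
Open Scope R_scope.

Definition Rinf (P : R -> Prop) : R := real (Glb_Rbar P).

Definition boundary (G : C -> Prop) (z : C) : Prop :=
  forall eps : R, 0 < eps ->
    (exists a, G a /\ Cmod (a - z)%C < eps) /\
    (exists b, ~ G b /\ Cmod (b - z)%C < eps).

Definition dG (G : C -> Prop) (x : C) : R :=
  Rinf (fun r => exists z, boundary G z /\ r = Cmod (x - z)%C).

Definition tildeSet (G : C -> Prop) (x xt : C) : Prop :=
  Cmod (xt - x)%C = 2 * dG G x /\ boundary G ((x + xt) / RtoC 2)%C.

Definition wG (G : C -> Prop) (x y : C) : R :=
  Cmod (x - y)%C /
  Rmin (Rinf (fun r => exists yt, tildeSet G y yt /\ r = Cmod (x - yt)%C))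
       (Rinf (fun r => exists xt, tildeSet G x xt /\ r = Cmod (y - xt)%C)).

Definition sector (theta : R) (z : C) : Prop :=
  z <> 0%C /\
  exists phi, 0 < phi < theta /\ z = (Cmod z * cos phi, Cmod z * sin phi).

Definition parg (z : C) : R :=
  if Rle_dec 0 (Im z) then acos (Re z / Cmod z)
  else 2 * PI - acos (Re z / Cmod z).

(* z^(b/a) with the branch arg z in (0, a) (a < 2 pi): for z in S_a this
   equals |z|^(b/a) e^{i (b/a) arg z}. *)
Definition spow (a b : R) (z : C) : C :=
  (Rpower (Cmod z) (b / a) * cos (b / a * parg z),
   Rpower (Cmod z) (b / a) * sin (b / a * parg z)).

From Stdlib Require Import Reals Lra Psatz.
From Coquelicot Require Import Coquelicot.
Open Scope R_scope.

(* 1. For a wedge G (two half-planes through 0 with unit normals n, m), d_G(x) is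
      the distance to the nearer side and tilde X consists of the mirror images of
      x in its nearest side(s); since |y - mirror_n x|^2 = |x - y|^2 + 4 <n,x><n,y>,
        w_G(x,y) = |x-y| / sqrt (|x-y|^2 + 4 min (<n,x><n,y>, <m,x><m,y>))
      ([wG_wedge]).
   2. For x = r e^{ia}, y = s e^{ib} in S_theta this reads
        w^2 = (sinh^2 X + sin^2 c) / (sinh^2 X + sin^2 e),
      X = log (r/s) / 2, c = |a - b| / 2, e = min ((a+b)/2, theta - (a+b)/2)
      ([w_sector_hyperbolic]), and z -> z^k multiplies X, c, e by k
      ([w_spow_hyperbolic]).
   3. Both inequalities then reduce to one-variable calculus: k sinh x <= sinh (k x),
      sin (k x) <= k sin x, monotonicity of sin (k t) / sin t, of
      t^2/sinh^2 t + t^2/3 and of t^2/sin^2 t - t^2/3, combined by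
      cross-multiplication ([wsec_scale_bounds]).
   4. Sharpness: equal arguments and moduli ratio -> oo push w_alpha to 1 while
      w_beta <= 1; unit moduli symmetric about the bisector with vanishing gap
      make the ratio tend to K. *)

Lemma le_of_nonneg_derive (f df : R -> R) (a b : R) : a <= b ->
  (forall x, a <= x <= b -> is_derive f x (df x)) ->
  (forall x, a <= x <= b -> 0 <= df x) -> f a <= f b.
Proof.
  intros Hab Hd Hp.
  destruct (MVT_gen f a b df) as [c [Hc E]];
    rewrite ?Rmin_left, ?Rmax_right in * by lra.
  - intros x Hx. apply Hd. lra.
  - intros x Hx. apply derivable_continuous_pt. exists (df x).
    apply is_derive_Reals, Hd. lra.
  - assert (0 <= df c) by (apply Hp; lra). nra.
Qed.

Lemma sin_scale_le (k x : R) : 1 <= k -> 0 <= x -> k * x <= PI -> sin (k * x) <= k * sin x.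
Proof.
  intros Hk Hx Hkx.
  enough (k * sin 0 - sin (k * 0) <= k * sin x - sin (k * x))
    by (rewrite Rmult_0_r, sin_0 in *; lra).
  apply (le_of_nonneg_derive (fun t => k * sin t - sin (k * t))
           (fun t => k * cos t - k * cos (k * t))); [lra| |].
  - intros t Ht. auto_derive; [auto | ring].
  - intros t Ht. assert (cos (k * t) <= cos t) by (apply cos_decr_1; nra). nra.
Qed.

(** The ratio sin (k t) / sin t decreases on (0, pi / (2k)]: in product form,
    sin c sin (k e) <= sin (k c) sin e for 0 <= c <= e. *)
Lemma sin_scale_ratio_antitone (k c e : R) : 1 <= k -> 0 <= c -> c <= e -> k * e <= PI / 2 ->
  sin c * sin (k * e) <= sin (k * c) * sin e.
Proof.
  intros Hk Hc Hce Hke. assert (HPI := PI_RGT_0).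
  destruct (Req_dec c 0) as [->|Hc0].
  { rewrite Rmult_0_r, sin_0, !Rmult_0_l. lra. }
  (* The numerator of the derivative of sin (k t) / sin t has a sign. *)
  assert (Hnum : forall t, 0 <= t -> k * t <= PI ->
            0 <= sin (k * t) * cos t - k * cos (k * t) * sin t).
  { intros t Ht Hkt.
    enough (sin (k * 0) * cos 0 - k * cos (k * 0) * sin 0 <=
            sin (k * t) * cos t - k * cos (k * t) * sin t)
      by (rewrite Rmult_0_r, sin_0 in *; lra).
    apply (le_of_nonneg_derive (fun u => sin (k * u) * cos u - k * cos (k * u) * sin u)
             (fun u => (k * k - 1) * sin (k * u) * sin u)); [lra| |].
    - intros u Hu. auto_derive; [auto | ring].
    - intros u Hu.
      assert (0 <= sin (k * u)) by (apply sin_ge_0; nra).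
      assert (0 <= sin u) by (apply sin_ge_0; nra).
      apply Rmult_le_pos; [apply Rmult_le_pos|]; nra. }
  assert (Hs : forall t, c <= t <= e -> 0 < sin t) by (intros t Ht; apply sin_gt_0; nra).
  assert (Hq : - (sin (k * c) / sin c) <= - (sin (k * e) / sin e)).
  { apply (le_of_nonneg_derive (fun t => - (sin (k * t) / sin t))
      (fun t => (sin (k * t) * cos t - k * cos (k * t) * sin t) / (sin t * sin t))); [lra| |].
    - intros t Ht. assert (0 < sin t) by (apply Hs; lra).
      auto_derive; [lra | field; lra].
    - intros t Ht. assert (0 < sin t) by (apply Hs; lra).
      apply Rdiv_le_0_compat; [apply Hnum|]; nra. }
  assert (0 < sin c) by (apply Hs; lra). assert (0 < sin e) by (apply Hs; lra).
  apply (Rmult_le_compat_r (sin c * sin e)) in Hq; [|nra].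
  field_simplify in Hq; lra.
Qed.

Lemma sinh_opp (x : R) : sinh (- x) = - sinh x.
Proof. unfold sinh. rewrite Ropp_involutive. field. Qed.

Lemma sinh_pos (x : R) : 0 < x -> 0 < sinh x.
Proof. intros. rewrite <- sinh_0. apply sinh_lt. lra. Qed.

Lemma sinh_nonneg (x : R) : 0 <= x -> 0 <= sinh x.
Proof. intros [Hx| <-]; [left; apply sinh_pos; lra | rewrite sinh_0; lra]. Qed.

Lemma sinh_eq_0 (x : R) : sinh x = 0 -> x = 0.
Proof.
  intros H. destruct (Rtotal_order x 0) as [Hx|[Hx|Hx]]; auto.
  - assert (sinh x < sinh 0) by (apply sinh_lt; lra). rewrite sinh_0 in *. lra.
  - assert (0 < sinh x) by (apply sinh_pos; lra). lra.
Qed.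

Lemma cosh_le (x y : R) : 0 <= x -> x <= y -> cosh x <= cosh y.
Proof.
  intros Hx Hxy. apply (le_of_nonneg_derive cosh sinh); [lra| |].
  - intros t _. unfold cosh, sinh. auto_derive; [auto | field].
  - intros t Ht. apply sinh_nonneg. lra.
Qed.

(** k sinh x <= sinh (k x) for k >= 1 and x >= 0 (convexity of sinh on [0, +oo)). *)
Lemma sinh_scale_ge (k x : R) : 1 <= k -> 0 <= x -> k * sinh x <= sinh (k * x).
Proof.
  intros Hk Hx.
  enough (sinh (k * 0) - k * sinh 0 <= sinh (k * x) - k * sinh x)
    by (rewrite Rmult_0_r, sinh_0 in *; lra).
  apply (le_of_nonneg_derive (fun t => sinh (k * t) - k * sinh t)
           (fun t => k * cosh (k * t) - k * cosh t)); [lra| |].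
  - intros t Ht. unfold sinh, cosh. auto_derive; [auto | field].
  - intros t Ht. assert (cosh t <= cosh (k * t)) by (apply cosh_le; nra). nra.
Qed.

Lemma sinh_quotient_mono (x y : R) : 0 < x -> x <= y ->
  x ^ 2 / sinh x ^ 2 + x ^ 2 / 3 <= y ^ 2 / sinh y ^ 2 + y ^ 2 / 3.
Proof.
  intros Hx Hxy.
  assert (Hpsi : forall t, 0 <= t -> 0 <= sinh t * cosh t - t).
  { intros t Ht.
    enough (sinh 0 * cosh 0 - 0 <= sinh t * cosh t - t) by (rewrite sinh_0 in *; lra).
    apply (le_of_nonneg_derive (fun u => sinh u * cosh u - u) (fun u => 2 * (sinh u * sinh u)));
      [lra| |intros; nra].
    intros u _. unfold sinh, cosh. auto_derive; [auto|].
    assert (exp u * exp (- u) = 1) by (rewrite <- exp_plus, Rplus_opp_r; apply exp_0).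
    field_simplify. nra. }
  assert (Hphi : forall t, 0 <= t -> 0 <= sinh t + sinh t ^ 3 / 3 - t * cosh t).
  { intros t Ht.
    enough (sinh 0 + sinh 0 ^ 3 / 3 - 0 * cosh 0 <= sinh t + sinh t ^ 3 / 3 - t * cosh t)
      by (rewrite sinh_0 in *; lra).
    apply (le_of_nonneg_derive (fun u => sinh u + sinh u ^ 3 / 3 - u * cosh u)
             (fun u => sinh u * (sinh u * cosh u - u))); [lra| |].
    - intros u _. unfold sinh, cosh. auto_derive; [auto | field].
    - intros u Hu. apply Rmult_le_pos; [apply sinh_nonneg | apply Hpsi]; lra. }
  apply (le_of_nonneg_derive (fun t => t ^ 2 / sinh t ^ 2 + t ^ 2 / 3)
     (fun t => (2 * t / sinh t ^ 3) * (sinh t + sinh t ^ 3 / 3 - t * cosh t))); [lra| |].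
  - intros t Ht. assert (0 < sinh t) by (apply sinh_pos; lra).
    unfold sinh, cosh in *. auto_derive; [intro; nra | field; lra].
  - intros t Ht. assert (0 < sinh t) by (apply sinh_pos; lra).
    apply Rmult_le_pos; [apply Rdiv_le_0_compat; [lra | apply pow_lt; lra] | apply Hphi; lra].
Qed.

Lemma sin_ge_tcos (x : R) : 0 <= x -> x <= PI -> 0 <= sin x - x * cos x - sin x ^ 3 / 3.
Proof.
  intros Hx HxP.
  assert (Hpsi : forall t, 0 <= t -> 0 <= t - sin t * cos t).
  { intros t Ht.
    enough (0 - sin 0 * cos 0 <= t - sin t * cos t) by (rewrite sin_0 in *; lra).
    apply (le_of_nonneg_derive (fun u => u - sin u * cos u) (fun u => 2 * (sin u * sin u)));
      [lra| |intros; nra].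
    intros u _. auto_derive; [auto|]. assert (H1 := sin2_cos2 u). unfold Rsqr in H1. nra. }
  enough (sin 0 - 0 * cos 0 - sin 0 ^ 3 / 3 <= sin x - x * cos x - sin x ^ 3 / 3)
    by (rewrite sin_0 in *; lra).
  apply (le_of_nonneg_derive (fun t => sin t - t * cos t - sin t ^ 3 / 3)
           (fun t => sin t * (t - sin t * cos t))); [lra| |].
  - intros t _. auto_derive; [auto | field].
  - intros t Ht. apply Rmult_le_pos; [apply sin_ge_0 | apply Hpsi]; lra.
Qed.

Lemma sin_quotient_mono (x y : R) : 0 < x -> x <= y -> y < PI ->
  x ^ 2 / sin x ^ 2 - x ^ 2 / 3 <= y ^ 2 / sin y ^ 2 - y ^ 2 / 3.
Proof.
  intros Hx Hxy Hy.
  apply (le_of_nonneg_derive (fun t => t ^ 2 / sin t ^ 2 - t ^ 2 / 3)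
     (fun t => (2 * t / sin t ^ 3) * (sin t - t * cos t - sin t ^ 3 / 3))); [lra| |].
  - intros t Ht. assert (0 < sin t) by (apply sin_gt_0; lra).
    auto_derive; [intro; nra | field; lra].
  - intros t Ht. assert (0 < sin t) by (apply sin_gt_0; lra).
    apply Rmult_le_pos; [apply Rdiv_le_0_compat; [lra | apply pow_lt; lra]|].
    apply sin_ge_tcos; lra.
Qed.

(** The two monotonicity facts combine, the +-1/3 terms cancelling:
    1/sinh^2 x + 1/sin^2 y <= k^2/sinh^2 (k x) + k^2/sin^2 (k y). *)
Lemma inv_sq_sum_scale (k x y : R) : 1 <= k -> 0 < x -> 0 < y -> k * y < PI ->
  / sinh x ^ 2 + / sin y ^ 2 <= k * k / sinh (k * x) ^ 2 + k * k / sin (k * y) ^ 2.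
Proof.
  intros Hk Hx Hy Hky.
  assert (0 < sinh x) by (apply sinh_pos; lra).
  assert (0 < sinh (k * x)) by (apply sinh_pos; nra).
  assert (0 < sin y) by (apply sin_gt_0; nra).
  assert (0 < sin (k * y)) by (apply sin_gt_0; nra).
  assert (HJ := sinh_quotient_mono x (k * x) Hx ltac:(nra)).
  assert (HI := sin_quotient_mono y (k * y) Hy ltac:(nra) Hky).
  assert (J : / sinh x ^ 2 + / 3 <= k * k / sinh (k * x) ^ 2 + k * k / 3).
  { apply (Rmult_le_reg_l (x ^ 2)); [nra|].
    replace (x ^ 2 * (/ sinh x ^ 2 + / 3)) with (x ^ 2 / sinh x ^ 2 + x ^ 2 / 3) by (field; lra).
    replace (x ^ 2 * (k * k / sinh (k * x) ^ 2 + k * k / 3))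
      with ((k * x) ^ 2 / sinh (k * x) ^ 2 + (k * x) ^ 2 / 3) by (field; lra).
    exact HJ. }
  assert (I : / sin y ^ 2 - / 3 <= k * k / sin (k * y) ^ 2 - k * k / 3).
  { apply (Rmult_le_reg_l (y ^ 2)); [nra|].
    replace (y ^ 2 * (/ sin y ^ 2 - / 3)) with (y ^ 2 / sin y ^ 2 - y ^ 2 / 3) by (field; lra).
    replace (y ^ 2 * (k * k / sin (k * y) ^ 2 - k * k / 3))
      with ((k * y) ^ 2 / sin (k * y) ^ 2 - (k * y) ^ 2 / 3) by (field; lra).
    exact HI. }
  lra.
Qed.

(** Read p, P as
    sinh^2 x, sinh^2 (k x) and s_i, s_i' as sin^2 of angles before and after
    multiplication by k; they give the lower and the upper bound of the theorem. *)
Lemma cross_lower (k p P s1 s2 s1' s2' : R) :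
  0 <= p -> k * k * p <= P -> 0 <= s1 -> s1 <= s2 ->
  s2' - s1' <= k * k * (s2 - s1) -> s1 * s2' <= s1' * s2 ->
  (p + s1) * (P + s2') <= (P + s1') * (p + s2).
Proof.
  intros.
  assert (p * (s2' - s1') <= p * (k * k * (s2 - s1))) by (apply Rmult_le_compat_l; lra).
  assert (k * k * p * (s2 - s1) <= P * (s2 - s1)) by (apply Rmult_le_compat_r; lra).
  nra.
Qed.

(** The upper bound is the product of three ratio estimates:
    (P+s1')/(p+s1) <= P/p,  (p+s2)/(P+s2') <= (p+sa)/(P+sa')  and
    P/p * (p+sa)/(P+sa') <= k^2 sa/sa'  (the last one is hypothesis [Hend]). *)
Lemma cross_upper (k p P s1 s2 s1' s2' sa sa' : R) :
  0 <= p -> k * k * p <= P -> 0 <= s1 -> s1 <= s2 -> s2 <= sa ->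
  0 <= s1' -> 0 <= s2' -> 0 < sa' ->
  s1' <= k * k * s1 -> s2 * sa' <= s2' * sa -> sa' - s2' <= k * k * (sa - s2) ->
  (p = 0 -> P = 0) ->
  (0 < p -> P * (p + sa) * sa' <= k * k * sa * p * (P + sa')) ->
  (P + s1') * (p + s2) * sa' <= k * k * sa * (p + s1) * (P + s2').
Proof.
  intros Hp HP Hs1 Hs12 Hs2a Hs1' Hs2' Hsa' Hsc1 Hratio Hgap HP0 Hend.
  assert (HPpos : 0 <= P) by (assert (0 <= k * k * p) by (apply Rmult_le_pos; nra); lra).
  destruct (Req_dec p 0) as [Hp0|Hp0].
  { rewrite HP0 by auto. subst p.
    assert (s1' * (s2 * sa') <= (k * k * s1) * (s2' * sa)) by (apply Rmult_le_compat; nra).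
    nra. }
  specialize (Hend ltac:(lra)).
  assert (H1 : (P + s1') * p <= P * (p + s1)).
  { assert (s1' * p <= k * k * s1 * p) by (apply Rmult_le_compat_r; lra).
    assert (k * k * p * s1 <= P * s1) by (apply Rmult_le_compat_r; lra). nra. }
  assert (H2 : (p + s2) * (P + sa') <= (P + s2') * (p + sa)) by (apply (cross_lower k); nra).
  assert (H3 : (P + s1') * p * ((p + s2) * (P + sa')) <= P * (p + s1) * ((P + s2') * (p + sa)))
    by (apply Rmult_le_compat; nra).
  assert (H4 : (p + s1) * (P + s2') * (P * (p + sa) * sa') <=
               (p + s1) * (P + s2') * (k * k * sa * p * (P + sa')))
    by (apply Rmult_le_compat_l; nra).
  assert (H5 : ((P + s1') * (p + s2) * sa') * (p * (P + sa')) <=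
               (k * k * sa * (p + s1) * (P + s2')) * (p * (P + sa'))).
  { apply (Rmult_le_compat_r sa') in H3; nra. }
  apply Rmult_le_reg_r in H5; [exact H5 | nra].
Qed.

Lemma sin_sq_diff (X Y : R) : sin X ^ 2 - sin Y ^ 2 = sin (X + Y) * sin (X - Y).
Proof.
  rewrite sin_plus, sin_minus. assert (H1 := sin2_cos2 X). assert (H2 := sin2_cos2 Y).
  unfold Rsqr in *. nra.
Qed.

Lemma sin_sq_scale_le (k c : R) : 1 <= k -> 0 <= c -> k * c <= PI ->
  sin (k * c) ^ 2 <= k * k * sin c ^ 2.
Proof.
  intros Hk Hc Hkc. assert (H := sin_scale_le k c Hk Hc Hkc).
  assert (0 <= sin (k * c)) by (apply sin_ge_0; nra).
  assert (sin (k * c) * sin (k * c) <= (k * sin c) * (k * sin c)) by (apply Rmult_le_compat; lra).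
  nra.
Qed.

Lemma sin_sq_gap_scale_le (k c e : R) : 1 <= k -> 0 <= c -> c <= e -> k * e <= PI / 2 ->
  sin (k * e) ^ 2 - sin (k * c) ^ 2 <= k * k * (sin e ^ 2 - sin c ^ 2).
Proof.
  intros Hk Hc Hce Hke. assert (HPI := PI_RGT_0).
  rewrite !sin_sq_diff.
  replace (k * e + k * c) with (k * (e + c)) by ring.
  replace (k * e - k * c) with (k * (e - c)) by ring.
  assert (H1 := sin_scale_le k (e + c) Hk ltac:(lra) ltac:(nra)).
  assert (H2 := sin_scale_le k (e - c) Hk ltac:(lra) ltac:(nra)).
  assert (0 <= sin (k * (e + c))) by (apply sin_ge_0; nra).
  assert (0 <= sin (k * (e - c))) by (apply sin_ge_0; nra).
  assert (sin (k * (e + c)) * sin (k * (e - c)) <= (k * sin (e + c)) * (k * sin (e - c)))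
    by (apply Rmult_le_compat; lra).
  nra.
Qed.

Lemma sin_sq_ratio_antitone (k c e : R) : 1 <= k -> 0 <= c -> c <= e -> k * e <= PI / 2 ->
  sin c ^ 2 * sin (k * e) ^ 2 <= sin (k * c) ^ 2 * sin e ^ 2.
Proof.
  intros Hk Hc Hce Hke. assert (HPI := PI_RGT_0).
  assert (H := sin_scale_ratio_antitone k c e Hk Hc Hce Hke).
  assert (0 <= sin c) by (apply sin_ge_0; nra).
  assert (0 <= sin (k * e)) by (apply sin_ge_0; nra).
  assert ((sin c * sin (k * e)) * (sin c * sin (k * e)) <=
          (sin (k * c) * sin e) * (sin (k * c) * sin e))
    by (apply Rmult_le_compat; nra).
  nra.
Qed.

(** The hyperbolic-versus-trigonometric estimate feeding [Hend] of [cross_upper];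
    it is [inv_sq_sum_scale] with denominators cleared. *)
Lemma sinh_sin_sq_cross (k x y : R) : 1 <= k -> 0 < x -> 0 < y -> k * y < PI ->
  sinh (k * x) ^ 2 * (sinh x ^ 2 + sin y ^ 2) * sin (k * y) ^ 2 <=
  k * k * sin y ^ 2 * sinh x ^ 2 * (sinh (k * x) ^ 2 + sin (k * y) ^ 2).
Proof.
  intros Hk Hx Hy Hky. assert (H := inv_sq_sum_scale k x y Hk Hx Hy Hky).
  assert (0 < sinh x) by (apply sinh_pos; lra).
  assert (0 < sinh (k * x)) by (apply sinh_pos; nra).
  assert (0 < sin y) by (apply sin_gt_0; nra).
  assert (0 < sin (k * y)) by (apply sin_gt_0; nra).
  set (q := sinh x ^ 2) in *. set (Q := sinh (k * x) ^ 2) in *.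
  set (u := sin y ^ 2) in *. set (u' := sin (k * y) ^ 2) in *.
  assert (0 < q) by (unfold q; nra). assert (0 < Q) by (unfold Q; nra).
  assert (0 < u) by (unfold u; nra). assert (0 < u') by (unfold u'; nra).
  assert (E : (k * k / Q + k * k / u' - (/ q + / u)) * (q * Q * u * u') =
              k * k * u * q * (Q + u') - Q * (q + u) * u') by (field; lra).
  assert (0 <= (k * k / Q + k * k / u' - (/ q + / u)) * (q * Q * u * u')).
  { apply Rmult_le_pos; [lra|].
    apply Rmult_le_pos; [apply Rmult_le_pos; [apply Rmult_le_pos|]|]; lra. }
  lra.
Qed.

(** In the coordinates x = log-ratio of the moduli, c = half the angular gap and
    e = distance to the nearest side (see [w_sector_hyperbolic]) the point-pair
    function of a sector reads [wsec x c e]; the map z -> z^k multiplies x, c, e by k. *)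
Definition wsec (x c e : R) : R :=
  sqrt ((sinh x ^ 2 + sin c ^ 2) / (sinh x ^ 2 + sin e ^ 2)).

Lemma wsec_abs (x c e : R) : wsec (Rabs x) c e = wsec x c e.
Proof.
  unfold wsec, Rabs. destruct (Rcase_abs x); [|reflexivity].
  rewrite sinh_opp. f_equal. f_equal; ring.
Qed.

Lemma wsec_cross_bounds (k al x c e : R) : 1 <= k -> 0 < al -> k * al <= PI ->
  0 <= x -> 0 <= c -> c <= e -> 0 < e -> e <= al / 2 ->
  let p := sinh x ^ 2 in let P := sinh (k * x) ^ 2 in
  let s1 := sin c ^ 2 in let s2 := sin e ^ 2 in
  let s1' := sin (k * c) ^ 2 in let s2' := sin (k * e) ^ 2 in
  let sa := sin (al / 2) ^ 2 in let sa' := sin (k * (al / 2)) ^ 2 in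
  (p + s1) * (P + s2') <= (P + s1') * (p + s2) /\
  (P + s1') * (p + s2) * sa' <= k * k * sa * (p + s1) * (P + s2').
Proof.
  intros Hk Hal Hkal Hx Hc Hce He Hea p P s1 s2 s1' s2' sa sa'.
  assert (HPI := PI_RGT_0).
  assert (Hsc : 0 <= sin c) by (apply sin_ge_0; nra).
  assert (Hsce : sin c <= sin e) by (apply sin_incr_1; nra).
  assert (Hsea : sin e <= sin (al / 2)) by (apply sin_incr_1; nra).
  assert (Hsa' : 0 < sin (k * (al / 2))) by (apply sin_gt_0; nra).
  assert (HkP : k * k * p <= P).
  { assert (H := sinh_scale_ge k x Hk Hx). assert (0 <= sinh x) by (apply sinh_nonneg; lra).
    assert (k * sinh x * (k * sinh x) <= sinh (k * x) * sinh (k * x))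
      by (apply Rmult_le_compat; nra).
    unfold p, P. nra. }
  assert (Hp : 0 <= p) by (unfold p; nra).
  assert (Hs1 : 0 <= s1) by (unfold s1; nra).
  assert (Hs12 : s1 <= s2) by (unfold s1, s2; nra).
  assert (Hs2a : s2 <= sa) by (unfold s2, sa; nra).
  assert (Hs1' : 0 <= s1') by (unfold s1'; nra).
  assert (Hs2' : 0 <= s2') by (unfold s2'; nra).
  assert (Hsa'' : 0 < sa') by (unfold sa'; nra).
  assert (Hratio : forall u v, 0 <= u -> u <= v -> v <= al / 2 ->
            sin u ^ 2 * sin (k * v) ^ 2 <= sin (k * u) ^ 2 * sin v ^ 2)
    by (intros; apply sin_sq_ratio_antitone; nra).
  split.
  - apply (cross_lower k); try assumption.
    + apply sin_sq_gap_scale_le; nra.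
    + apply Hratio; lra.
  - apply (cross_upper k); try assumption.
    + apply sin_sq_scale_le; nra.
    + apply Hratio; lra.
    + apply sin_sq_gap_scale_le; nra.
    + unfold p, P. intros Hp0. assert (Hsx : sinh x = 0) by nra.
      apply sinh_eq_0 in Hsx. subst x. rewrite Rmult_0_r, sinh_0. ring.
    + unfold p, P. intros Hp0. assert (Hx0 : 0 < x).
      { destruct Hx as [|<-]; auto. rewrite sinh_0 in Hp0. lra. }
      apply sinh_sin_sq_cross; nra.
Qed.

Lemma sqrt_ratio_le (L N D N' D' : R) : 0 <= L -> 0 <= N -> 0 < D -> 0 < D' ->
  N' * D <= L * L * N * D' -> sqrt (N' / D') <= L * sqrt (N / D).
Proof.
  intros HL HN HD HD' H.
  rewrite <- (sqrt_square L) at 1 by exact HL.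
  rewrite <- sqrt_mult by (try apply Rdiv_le_0_compat; nra).
  apply sqrt_le_1_alt, (Rmult_le_reg_r (D * D')); [nra|].
  replace (N' / D' * (D * D')) with (N' * D) by (field; lra).
  replace (L * L * (N / D) * (D * D')) with (L * L * N * D') by (field; lra).
  exact H.
Qed.

Lemma wsec_scale_bounds (k al x c e : R) : 1 <= k -> 0 < al -> k * al <= PI ->
  0 <= c -> c <= e -> 0 < e -> e <= al / 2 ->
  wsec x c e <= wsec (k * x) (k * c) (k * e) /\
  wsec (k * x) (k * c) (k * e) <= k * sin (al / 2) / sin (k * (al / 2)) * wsec x c e.
Proof.
  intros Hk Hal Hkal Hc Hce He Hea.
  rewrite <- (wsec_abs x), <- (wsec_abs (k * x)), Rabs_mult, (Rabs_right k) by lra.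
  assert (Hx := Rabs_pos x). set (y := Rabs x) in *. clearbody y. clear x. rename y into x.
  assert (HPI := PI_RGT_0).
  destruct (wsec_cross_bounds k al x c e) as [Hlow Hup]; auto.
  assert (Hsa : 0 < sin (al / 2)) by (apply sin_gt_0; nra).
  assert (Hsa' : 0 < sin (k * (al / 2))) by (apply sin_gt_0; nra).
  assert (Hs2 : 0 < sin e ^ 2) by (apply pow_lt, sin_gt_0; nra).
  assert (Hs2' : 0 < sin (k * e) ^ 2) by (apply pow_lt, sin_gt_0; nra).
  assert (Hp := pow2_ge_0 (sinh x)). assert (HP := pow2_ge_0 (sinh (k * x))).
  assert (Hs1 := pow2_ge_0 (sin c)). assert (Hs1' := pow2_ge_0 (sin (k * c))).
  unfold wsec. split.
  - rewrite <- (Rmult_1_l (sqrt (_ / (sinh (k * x) ^ 2 + _)))).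
    apply sqrt_ratio_le; lra.
  - apply sqrt_ratio_le; try lra.
    + apply Rdiv_le_0_compat; nra.
    + apply (Rmult_le_reg_r (sin (k * (al / 2)) ^ 2)); [apply pow_lt; lra|].
      replace (k * sin (al / 2) / sin (k * (al / 2)) * (k * sin (al / 2) / sin (k * (al / 2))) *
               (sinh x ^ 2 + sin c ^ 2) * (sinh (k * x) ^ 2 + sin (k * e) ^ 2) *
               sin (k * (al / 2)) ^ 2)
        with (k * k * sin (al / 2) ^ 2 * (sinh x ^ 2 + sin c ^ 2) *
              (sinh (k * x) ^ 2 + sin (k * e) ^ 2)) by (field; lra).
      exact Hup.
Qed.

Lemma Cminus_pair (a b c d : R) : ((a, b) - (c, d))%C = (a - c, b - d).
Proof. unfold Cminus, Cplus, Copp. simpl. f_equal; ring. Qed.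

Lemma Cmid_pair (a b c d : R) : (((a, b) + (c, d)) / RtoC 2)%C = ((a + c) / 2, (b + d) / 2).
Proof. unfold Cdiv, Cplus, Cmult, Cinv, RtoC. simpl. f_equal; field. Qed.

Lemma Cmod_pair (a b : R) : Cmod (a, b) = sqrt (a * a + b * b).
Proof. unfold Cmod. simpl. f_equal. ring. Qed.

Lemma Cmod_sq (z : C) : Cmod z * Cmod z = fst z * fst z + snd z * snd z.
Proof.
  destruct z as [a b]. rewrite Cmod_pair. simpl. apply sqrt_sqrt.
  assert (Ha := Rle_0_sqr a). assert (Hb := Rle_0_sqr b). unfold Rsqr in *. lra.
Qed.

Lemma Cmod_eq_of_sq (z : C) (d : R) :
  0 <= d -> fst z * fst z + snd z * snd z = d * d -> Cmod z = d.
Proof. intros Hd E. destruct z. rewrite Cmod_pair. simpl in *. rewrite E. now apply sqrt_square.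
Qed.

Lemma Cmod_sym (u v : C) : Cmod (u - v) = Cmod (v - u).
Proof. destruct u, v. rewrite !Cminus_pair, !Cmod_pair. f_equal. ring. Qed.

Lemma le_sqrt_of_sq (u v : R) : u * u <= v -> u <= sqrt v.
Proof.
  intros H. destruct (Rle_dec u 0). { assert (0 <= sqrt v) by apply sqrt_pos. lra. }
  rewrite <- (sqrt_square u) by lra. apply sqrt_le_1_alt. exact H.
Qed.

Lemma sqrt_le_of_sq (X r : R) : 0 <= r -> X <= r * r -> sqrt X <= r.
Proof. intros Hr H. rewrite <- (sqrt_square r) by lra. now apply sqrt_le_1_alt. Qed.

Lemma sqrt_lt_of_sq (X e : R) : 0 < e -> X < e * e -> sqrt X < e.
Proof.
  intros He H. destruct (Rle_lt_dec X 0). { rewrite sqrt_neg_0 by lra. exact He. }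
  rewrite <- (sqrt_square e) by lra. apply sqrt_lt_1_alt. lra.
Qed.

Lemma Rinf_ge_lb (S : R -> Prop) (m : R) :
  (exists r, S r) -> (forall r, S r -> m <= r) -> m <= Rinf S.
Proof.
  intros [r0 Hr0] Hm. unfold Rinf.
  destruct (Glb_Rbar_correct S) as [H1 H2].
  assert (A1 := H1 r0 Hr0). assert (A2 := H2 (Finite m) ltac:(intros r Hr; simpl; auto)).
  destruct (Glb_Rbar S) as [l| |]; simpl in *; auto; contradiction.
Qed.

Lemma Rinf_le_elt (S : R -> Prop) (m r0 : R) :
  (forall r, S r -> m <= r) -> S r0 -> Rinf S <= r0.
Proof.
  intros Hm Hr0. unfold Rinf.
  destruct (Glb_Rbar_correct S) as [H1 H2].
  assert (A1 := H1 r0 Hr0). assert (A2 := H2 (Finite m) ltac:(intros r Hr; simpl; auto)).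
  destruct (Glb_Rbar S) as [l| |]; simpl in *; auto; contradiction.
Qed.

Lemma Rinf_min (S : R -> Prop) (m : R) : S m -> (forall r, S r -> m <= r) -> Rinf S = m.
Proof. intros Hm Hl. apply Rle_antisym; [apply (Rinf_le_elt S m) | apply Rinf_ge_lb]; eauto. Qed.

Definition sdist (n1 n2 : R) (z : C) : R := n1 * fst z + n2 * snd z.

Lemma unit_cauchy_schwarz (n1 n2 a b : R) :
  n1 * n1 + n2 * n2 = 1 -> (n1 * a + n2 * b) * (n1 * a + n2 * b) <= a * a + b * b.
Proof.
  intros Hn.
  assert (E : (n1 * a + n2 * b) * (n1 * a + n2 * b) + (n1 * b - n2 * a) * (n1 * b - n2 * a) =
              (n1 * n1 + n2 * n2) * (a * a + b * b)) by ring.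
  rewrite Hn in E. assert (H := Rle_0_sqr (n1 * b - n2 * a)). unfold Rsqr in H. lra.
Qed.

Lemma sdist_lipschitz (n1 n2 : R) (u v : C) : n1 * n1 + n2 * n2 = 1 ->
  sdist n1 n2 u - sdist n1 n2 v <= Cmod (u - v).
Proof.
  intros Hn. destruct u as [u1 u2], v as [v1 v2].
  rewrite Cminus_pair, Cmod_pair. unfold sdist; simpl. apply le_sqrt_of_sq.
  replace (n1 * u1 + n2 * u2 - (n1 * v1 + n2 * v2)) with (n1 * (u1 - v1) + n2 * (u2 - v2)) by ring.
  now apply unit_cauchy_schwarz.
Qed.

(** A wedge: the intersection of the open half-planes with unit normals n and m
    through the origin, n <> -m.  Every sector S_theta with theta <= pi is one. *)
Definition wedge (n1 n2 m1 m2 : R) (G : C -> Prop) : Prop :=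
  n1 * n1 + n2 * n2 = 1 /\ m1 * m1 + m2 * m2 = 1 /\ -1 < n1 * m1 + n2 * m2 /\
  (forall z, G z <-> 0 < sdist n1 n2 z /\ 0 < sdist m1 m2 z).

Lemma wedge_swap n1 n2 m1 m2 G : wedge n1 n2 m1 m2 G -> wedge m1 m2 n1 n2 G.
Proof.
  intros [Hn [Hm [Hnm HG]]]. split; [|split; [|split]]; auto; [lra|].
  intros z. rewrite HG. tauto.
Qed.

Lemma wedge_boundary_inv n1 n2 m1 m2 G z : wedge n1 n2 m1 m2 G -> boundary G z ->
  0 <= sdist n1 n2 z /\ 0 <= sdist m1 m2 z /\ (sdist n1 n2 z <= 0 \/ sdist m1 m2 z <= 0).
Proof.
  intros [Hn [Hm [Hnm HG]]] Hb.
  assert (Closed : forall p1 p2, p1 * p1 + p2 * p2 = 1 ->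
            (forall a, G a -> 0 < sdist p1 p2 a) -> 0 <= sdist p1 p2 z).
  { intros p1 p2 Hp HGp. destruct (Rle_lt_dec 0 (sdist p1 p2 z)) as [|Hl]; auto.
    destruct (Hb (- sdist p1 p2 z) ltac:(lra)) as [[a [Ha Haz]] _].
    assert (H1 := sdist_lipschitz p1 p2 a z Hp). assert (H2 := HGp a Ha). lra. }
  assert (C1 : 0 <= sdist n1 n2 z) by (apply Closed; auto; intros a Ha; apply HG; auto).
  assert (C2 : 0 <= sdist m1 m2 z) by (apply Closed; auto; intros a Ha; apply HG; auto).
  repeat split; auto.
  destruct (Rle_lt_dec (sdist n1 n2 z) 0); auto.
  destruct (Rle_lt_dec (sdist m1 m2 z) 0); auto.
  set (mu := Rmin (sdist n1 n2 z) (sdist m1 m2 z)).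
  assert (Hmu1 : mu <= sdist n1 n2 z) by apply Rmin_l.
  assert (Hmu2 : mu <= sdist m1 m2 z) by apply Rmin_r.
  destruct (Hb mu) as [_ [b [Hb1 Hb2]]]; [apply Rmin_glb_lt; auto|].
  exfalso. apply Hb1, HG. rewrite Cmod_sym in Hb2.
  assert (H1 := sdist_lipschitz n1 n2 z b Hn). assert (H2 := sdist_lipschitz m1 m2 z b Hm).
  lra.
Qed.

(** ... and conversely every point of a side line that is on the closed side
    of the other line is a boundary point (push along n + m in and out). *)
Lemma wedge_boundary_of_side n1 n2 m1 m2 G z : wedge n1 n2 m1 m2 G ->
  0 <= sdist m1 m2 z -> sdist n1 n2 z = 0 -> boundary G z.
Proof.
  intros [Hn [Hm [Hnm HG]]] Hmz Hnz eps Heps. destruct z as [z1 z2].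
  set (lam := eps / 4). set (d1 := n1 + m1). set (d2 := n2 + m2).
  assert (Hip : n1 * m1 + n2 * m2 <= 1).
  { assert (H := unit_cauchy_schwarz n1 n2 m1 m2 Hn). nra. }
  assert (Hd : d1 * d1 + d2 * d2 <= 4) by (unfold d1, d2; nra).
  assert (Hclose : forall s, s * s = 1 ->
            Cmod ((z1 + s * lam * d1, z2 + s * lam * d2) - (z1, z2)) < eps).
  { intros s Hs. rewrite Cminus_pair, Cmod_pair. apply sqrt_lt_of_sq; [lra|].
    replace ((z1 + s * lam * d1 - z1) * (z1 + s * lam * d1 - z1) +
             (z2 + s * lam * d2 - z2) * (z2 + s * lam * d2 - z2))
      with ((s * s) * (lam * lam) * (d1 * d1 + d2 * d2)) by ring.
    rewrite Hs. unfold lam. nra. }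
  unfold sdist in *; simpl in *. split.
  - exists (z1 + 1 * lam * d1, z2 + 1 * lam * d2). split; [|apply Hclose; ring].
    apply HG. unfold sdist; simpl. unfold d1, d2, lam. split; nra.
  - exists (z1 + -1 * lam * d1, z2 + -1 * lam * d2). split; [|apply Hclose; ring].
    intros Hb. apply HG in Hb. unfold sdist in Hb; simpl in Hb. unfold d1, d2, lam in Hb. nra.
Qed.

Definition foot (n1 n2 : R) (x : C) : C :=
  (fst x - sdist n1 n2 x * n1, snd x - sdist n1 n2 x * n2).
Definition mirror (n1 n2 : R) (x : C) : C :=
  (fst x - 2 * sdist n1 n2 x * n1, snd x - 2 * sdist n1 n2 x * n2).

Lemma foot_boundary n1 n2 m1 m2 G x : wedge n1 n2 m1 m2 G -> G x ->
  sdist n1 n2 x <= sdist m1 m2 x ->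
  boundary G (foot n1 n2 x) /\ Cmod (x - foot n1 n2 x) = sdist n1 n2 x.
Proof.
  intros HW Gx Hle. pose proof HW as [Hn [Hm [Hnm HG]]].
  apply HG in Gx. destruct Gx as [Gn Gm].
  assert (Hip : n1 * m1 + n2 * m2 <= 1).
  { assert (H := unit_cauchy_schwarz n1 n2 m1 m2 Hn). nra. }
  destruct x as [x1 x2]. unfold foot, sdist in *; simpl in *.
  set (L := n1 * x1 + n2 * x2) in *.
  split.
  - apply (wedge_boundary_of_side n1 n2 m1 m2); auto; unfold sdist; simpl.
    + replace (m1 * (x1 - L * n1) + m2 * (x2 - L * n2))
        with ((m1 * x1 + m2 * x2) - L * (n1 * m1 + n2 * m2)) by ring.
      destruct (Rle_lt_dec (n1 * m1 + n2 * m2) 0); nra.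
    + replace (n1 * (x1 - L * n1) + n2 * (x2 - L * n2)) with (L - L * (n1 * n1 + n2 * n2))
        by (unfold L; ring).
      rewrite Hn. ring.
  - rewrite Cminus_pair. apply Cmod_eq_of_sq; [lra|]. simpl.
    replace ((x1 - (x1 - L * n1)) * (x1 - (x1 - L * n1)) +
             (x2 - (x2 - L * n2)) * (x2 - (x2 - L * n2)))
      with (L * L * (n1 * n1 + n2 * n2)) by ring.
    rewrite Hn. ring.
Qed.

Lemma dG_wedge n1 n2 m1 m2 G x : wedge n1 n2 m1 m2 G -> G x ->
  dG G x = Rmin (sdist n1 n2 x) (sdist m1 m2 x).
Proof.
  intros HW Gx. unfold dG. apply Rinf_min.
  - destruct (Rle_lt_dec (sdist n1 n2 x) (sdist m1 m2 x)) as [Hl|Hl].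
    + destruct (foot_boundary n1 n2 m1 m2 G x HW Gx Hl) as [Hb Hd].
      exists (foot n1 n2 x). rewrite Hd, Rmin_left; auto.
    + destruct (foot_boundary m1 m2 n1 n2 G x (wedge_swap _ _ _ _ _ HW) Gx ltac:(lra)) as [Hb Hd].
      exists (foot m1 m2 x). rewrite Hd, Rmin_right; auto. lra.
  - intros r [z [Hz ->]]. pose proof HW as [Hn [Hm _]].
    assert (Hmin1 := Rmin_l (sdist n1 n2 x) (sdist m1 m2 x)).
    assert (Hmin2 := Rmin_r (sdist n1 n2 x) (sdist m1 m2 x)).
    destruct (wedge_boundary_inv n1 n2 m1 m2 G z HW Hz) as [_ [_ [H|H]]].
    + assert (H1 := sdist_lipschitz n1 n2 x z Hn). lra.
    + assert (H1 := sdist_lipschitz m1 m2 x z Hm). lra.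
Qed.

(** A point of tilde X whose midpoint with x lies on the side n is the mirror
    image of x in that side (equality case of Cauchy-Schwarz). *)
Lemma tildeSet_one_side n1 n2 m1 m2 G x xt : wedge n1 n2 m1 m2 G -> G x ->
  Cmod (xt - x) = 2 * Rmin (sdist n1 n2 x) (sdist m1 m2 x) ->
  sdist n1 n2 ((x + xt) / RtoC 2)%C <= 0 ->
  sdist n1 n2 x <= sdist m1 m2 x /\ xt = mirror n1 n2 x.
Proof.
  intros HW Gx Hd HM. pose proof HW as [Hn [Hm [Hnm HG]]].
  apply HG in Gx. destruct Gx as [Gn Gm].
  set (d := Rmin (sdist n1 n2 x) (sdist m1 m2 x)) in *.
  assert (Hd1 : d <= sdist n1 n2 x) by apply Rmin_l.
  assert (Hd2 : d <= sdist m1 m2 x) by apply Rmin_r.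
  assert (HW2 := Cmod_sq (xt - x)). rewrite Hd in HW2.
  destruct x as [x1 x2], xt as [t1 t2]. rewrite Cmid_pair in HM. rewrite Cminus_pair in HW2.
  unfold mirror, sdist in *; simpl in *.
  set (a := x1 - t1) in *. set (b := x2 - t2) in *.
  assert (Hab : a * a + b * b = 4 * d * d) by (unfold a, b; nra).
  assert (Hs : d <= (n1 * a + n2 * b) / 2) by (unfold a, b; lra).
  assert (Hcs := unit_cauchy_schwarz n1 n2 a b Hn).
  assert (Hd0 : 0 < d) by (apply Rmin_glb_lt; auto).
  assert (Hsd : (n1 * a + n2 * b) / 2 = d) by nra.
  assert (E0 : (a - 2 * d * n1) * (a - 2 * d * n1) + (b - 2 * d * n2) * (b - 2 * d * n2) = 0).
  { replace ((a - 2 * d * n1) * (a - 2 * d * n1) + (b - 2 * d * n2) * (b - 2 * d * n2))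
      with ((a * a + b * b) - 8 * d * ((n1 * a + n2 * b) / 2) + 4 * d * d * (n1 * n1 + n2 * n2))
      by field.
    rewrite Hab, Hsd, Hn. ring. }
  apply Rplus_sqr_eq_0 in E0. destruct E0 as [E1 E2].
  assert (HL : n1 * x1 + n2 * x2 = d) by (unfold a, b in *; lra).
  split; [lra|]. rewrite HL. f_equal; unfold a, b in *; lra.
Qed.

Lemma tildeSet_wedge_inv n1 n2 m1 m2 G x xt : wedge n1 n2 m1 m2 G -> G x -> tildeSet G x xt ->
  (sdist n1 n2 x <= sdist m1 m2 x /\ xt = mirror n1 n2 x) \/
  (sdist m1 m2 x <= sdist n1 n2 x /\ xt = mirror m1 m2 x).
Proof.
  intros HW Gx [Hd Hb]. rewrite (dG_wedge n1 n2 m1 m2 G x HW Gx) in Hd.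
  destruct (wedge_boundary_inv n1 n2 m1 m2 G _ HW Hb) as [_ [_ [H|H]]].
  - left. now apply (tildeSet_one_side n1 n2 m1 m2 G).
  - right. apply (tildeSet_one_side m1 m2 n1 n2 G); auto.
    + now apply wedge_swap.
    + now rewrite Rmin_comm.
Qed.

Lemma mirror_tildeSet n1 n2 m1 m2 G x : wedge n1 n2 m1 m2 G -> G x ->
  sdist n1 n2 x <= sdist m1 m2 x -> tildeSet G x (mirror n1 n2 x).
Proof.
  intros HW Gx Hl. pose proof HW as [Hn [Hm [Hnm HG]]].
  destruct (foot_boundary n1 n2 m1 m2 G x HW Gx Hl) as [Hb _].
  assert (Gx' := Gx). apply HG in Gx'. destruct Gx' as [Gn Gm].
  split.
  - rewrite (dG_wedge n1 n2 m1 m2 G x HW Gx), Rmin_left by auto.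
    destruct x as [x1 x2]. unfold mirror. rewrite Cminus_pair. apply Cmod_eq_of_sq; [lra|].
    unfold sdist in *; simpl in *. set (L := n1 * x1 + n2 * x2) in *.
    replace ((x1 - 2 * L * n1 - x1) * (x1 - 2 * L * n1 - x1) +
             (x2 - 2 * L * n2 - x2) * (x2 - 2 * L * n2 - x2))
      with (4 * L * L * (n1 * n1 + n2 * n2)) by ring.
    rewrite Hn. ring.
  - replace ((x + mirror n1 n2 x) / RtoC 2)%C with (foot n1 n2 x); auto.
    destruct x as [x1 x2]. unfold mirror, foot. rewrite Cmid_pair. simpl. f_equal; field.
Qed.

Lemma dist_mirror_sq n1 n2 x y : n1 * n1 + n2 * n2 = 1 ->
  Cmod (y - mirror n1 n2 x) * Cmod (y - mirror n1 n2 x) =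
  Cmod (y - x) * Cmod (y - x) + 4 * (sdist n1 n2 x * sdist n1 n2 y).
Proof.
  intros Hn. destruct x as [x1 x2], y as [y1 y2]. unfold mirror.
  rewrite !Cminus_pair, !Cmod_sq. unfold sdist. simpl.
  set (L := n1 * x1 + n2 * x2).
  replace ((y1 - (x1 - 2 * L * n1)) * (y1 - (x1 - 2 * L * n1)) +
           (y2 - (x2 - 2 * L * n2)) * (y2 - (x2 - 2 * L * n2)))
    with ((y1 - x1) * (y1 - x1) + (y2 - x2) * (y2 - x2) +
          4 * L * (n1 * (y1 - x1) + n2 * (y2 - x2)) + 4 * L * L * (n1 * n1 + n2 * n2)) by ring.
  rewrite Hn. unfold L. ring.
Qed.

Definition tdist (G : C -> Prop) (x y : C) : R -> Prop :=
  fun r => exists yt, tildeSet G y yt /\ r = Cmod (x - yt).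

Lemma tdist_ge n1 n2 m1 m2 G x y : wedge n1 n2 m1 m2 G -> G x -> G y ->
  forall r, tdist G x y r ->
  sqrt (Cmod (x - y) * Cmod (x - y) +
        4 * Rmin (sdist n1 n2 x * sdist n1 n2 y) (sdist m1 m2 x * sdist m1 m2 y)) <= r.
Proof.
  intros HW Gx Gy r [yt [Ht ->]]. pose proof HW as [Hn [Hm _]].
  apply sqrt_le_of_sq; [apply Cmod_ge_0|].
  assert (Hmin1 := Rmin_l (sdist n1 n2 x * sdist n1 n2 y) (sdist m1 m2 x * sdist m1 m2 y)).
  assert (Hmin2 := Rmin_r (sdist n1 n2 x * sdist n1 n2 y) (sdist m1 m2 x * sdist m1 m2 y)).
  destruct (tildeSet_wedge_inv n1 n2 m1 m2 G y yt HW Gy Ht) as [[_ ->]|[_ ->]];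
    rewrite dist_mirror_sq by auto; nra.
Qed.

Lemma tdist_inhabited n1 n2 m1 m2 G x y : wedge n1 n2 m1 m2 G -> G y -> exists r, tdist G x y r.
Proof.
  intros HW Gy. destruct (Rle_lt_dec (sdist n1 n2 y) (sdist m1 m2 y)).
  - exists (Cmod (x - mirror n1 n2 y)), (mirror n1 n2 y). split; auto.
    now apply (mirror_tildeSet n1 n2 m1 m2).
  - exists (Cmod (x - mirror m1 m2 y)), (mirror m1 m2 y). split; auto.
    apply (mirror_tildeSet m1 m2 n1 n2); auto; [now apply wedge_swap | lra].
Qed.

Lemma tdist_nonneg G x y : forall r, tdist G x y r -> 0 <= r.
Proof. intros r [yt [_ ->]]. apply Cmod_ge_0. Qed.

(** When the n-side product is the smaller one, the lower bound of [tdist_ge]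
    is attained by one of the two infima: reflect whichever of x, y is nearer
    to the n-side. *)
Lemma tdist_attained n1 n2 m1 m2 G x y : wedge n1 n2 m1 m2 G -> G x -> G y ->
  sdist n1 n2 x * sdist n1 n2 y <= sdist m1 m2 x * sdist m1 m2 y ->
  let V := sqrt (Cmod (x - y) * Cmod (x - y) + 4 * (sdist n1 n2 x * sdist n1 n2 y)) in
  Rinf (tdist G x y) <= V \/ Rinf (tdist G y x) <= V.
Proof.
  intros HW Gx Gy Hle V. pose proof HW as [Hn [Hm [Hnm HG]]].
  assert (Gx' := Gx). apply HG in Gx'. assert (Gy' := Gy). apply HG in Gy'.
  destruct (Rle_lt_dec (sdist n1 n2 y) (sdist m1 m2 y)).
  - left. apply (Rinf_le_elt _ 0); [apply tdist_nonneg|].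
    exists (mirror n1 n2 y). split; [now apply (mirror_tildeSet n1 n2 m1 m2)|].
    unfold V. rewrite (Rmult_comm (sdist n1 n2 x)), <- dist_mirror_sq by auto.
    rewrite sqrt_square; auto. apply Cmod_ge_0.
  - right. apply (Rinf_le_elt _ 0); [apply tdist_nonneg|].
    assert (sdist n1 n2 x <= sdist m1 m2 x).
    { destruct (Rle_lt_dec (sdist n1 n2 x) (sdist m1 m2 x)); auto. nra. }
    exists (mirror n1 n2 x). split; [now apply (mirror_tildeSet n1 n2 m1 m2)|].
    unfold V. rewrite (Cmod_sym x y), <- dist_mirror_sq by auto.
    rewrite sqrt_square; auto. apply Cmod_ge_0.
Qed.

Lemma wG_wedge n1 n2 m1 m2 G x y : wedge n1 n2 m1 m2 G -> G x -> G y ->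
  wG G x y = Cmod (x - y) / sqrt (Cmod (x - y) * Cmod (x - y) +
    4 * Rmin (sdist n1 n2 x * sdist n1 n2 y) (sdist m1 m2 x * sdist m1 m2 y)).
Proof.
  intros HW Gx Gy. unfold wG. f_equal.
  fold (tdist G x y). fold (tdist G y x).
  set (V := sqrt _).
  assert (HA : V <= Rinf (tdist G x y)).
  { apply Rinf_ge_lb; [apply (tdist_inhabited n1 n2 m1 m2)|apply (tdist_ge n1 n2 m1 m2)]; auto. }
  assert (HB : V <= Rinf (tdist G y x)).
  { apply Rinf_ge_lb; [now apply (tdist_inhabited n1 n2 m1 m2)|]. intros r Hr.
    unfold V. rewrite Cmod_sym, (Rmult_comm (sdist n1 n2 x)), (Rmult_comm (sdist m1 m2 x)).
    now apply (tdist_ge n1 n2 m1 m2 G). }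
  apply Rle_antisym; [|apply Rmin_glb; auto].
  destruct (Rle_lt_dec (sdist n1 n2 x * sdist n1 n2 y) (sdist m1 m2 x * sdist m1 m2 y)) as [Hl|Hl].
  - unfold V. rewrite (Rmin_left (sdist n1 n2 x * sdist n1 n2 y)) by auto.
    destruct (tdist_attained n1 n2 m1 m2 G x y HW Gx Gy Hl) as [H|H].
    + eapply Rle_trans; [apply Rmin_l | exact H].
    + eapply Rle_trans; [apply Rmin_r | exact H].
  - unfold V. rewrite (Rmin_right (sdist n1 n2 x * sdist n1 n2 y)) by lra.
    destruct (tdist_attained m1 m2 n1 n2 G x y (wedge_swap _ _ _ _ _ HW) Gx Gy ltac:(lra)) as [H|H].
    + eapply Rle_trans; [apply Rmin_l | exact H].
    + eapply Rle_trans; [apply Rmin_r | exact H].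
Qed.

Definition pol (r phi : R) : C := (r * cos phi, r * sin phi).

Lemma Cmod_pol (r phi : R) : 0 <= r -> Cmod (pol r phi) = r.
Proof.
  intros Hr. apply Cmod_eq_of_sq; auto. simpl.
  assert (H := sin2_cos2 phi). unfold Rsqr in H. nra.
Qed.

Lemma sector_pol (th r phi : R) : 0 < r -> 0 < phi < th -> sector th (pol r phi).
Proof.
  intros Hr Hphi. split.
  - intros E. assert (H := Cmod_pol r phi ltac:(lra)). rewrite E, Cmod_0 in H. lra.
  - exists phi. rewrite Cmod_pol by lra. auto.
Qed.

Lemma sector_polar (th : R) (z : C) : sector th z ->
  exists r phi, 0 < r /\ 0 < phi < th /\ z = pol r phi.
Proof.
  intros [Hz [phi [Hphi Ez]]]. exists (Cmod z), phi. repeat split; auto; try lra.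
  destruct (Rle_lt_or_eq_dec 0 (Cmod z) (Cmod_ge_0 z)) as [|H]; auto.
  exfalso. apply Hz, Cmod_eq_0. auto.
Qed.

Lemma polar_upper_half (z : C) : 0 < snd z -> exists phi, 0 < phi < PI /\ z = pol (Cmod z) phi.
Proof.
  destruct z as [a b]; simpl. intros Hb.
  assert (Hr2 := Cmod_sq (a, b)). simpl in Hr2.
  set (r := Cmod (a, b)) in *.
  assert (Hrp : 0 < r).
  { destruct (Rle_lt_or_eq_dec 0 r (Cmod_ge_0 _)) as [|H]; auto. rewrite <- H in Hr2. nra. }
  assert (Hab : -1 <= a / r <= 1).
  { assert (Ha : - r <= a <= r) by nra.
    split; apply (Rmult_le_reg_r r); auto; replace (a / r * r) with a by (field; lra); lra. }
  set (phi := acos (a / r)).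
  assert (Hc : cos phi = a / r) by (apply cos_acos; auto).
  assert (Hs : sin phi = b / r).
  { unfold phi. rewrite sin_acos by auto.
    replace (1 - (a / r)²) with ((b / r) * (b / r))
      by (unfold Rsqr; apply (Rmult_eq_reg_r (r * r)); [|nra]; field_simplify; lra).
    apply sqrt_square, Rdiv_le_0_compat; lra. }
  assert (Hbd := acos_bound (a / r)). fold phi in Hbd.
  assert (Hsp : 0 < sin phi) by (rewrite Hs; apply Rdiv_lt_0_compat; lra).
  exists phi. split.
  - split; [destruct (Req_dec phi 0) as [E|]; [rewrite E, sin_0 in Hsp|]|
            destruct (Req_dec phi PI) as [E|]; [rewrite E, sin_PI in Hsp|]]; lra.
  - unfold pol. rewrite Hc, Hs. f_equal; field; lra.
Qed.

Lemma sdist_pol_base (r a : R) : sdist 0 1 (pol r a) = r * sin a.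
Proof. unfold sdist, pol; simpl. ring. Qed.

Lemma sdist_pol_side (th r a : R) : sdist (sin th) (- cos th) (pol r a) = r * sin (th - a).
Proof. unfold sdist, pol; simpl. rewrite sin_minus. ring. Qed.

Lemma sector_wedge (th : R) : 0 < th -> th <= PI -> wedge 0 1 (sin th) (- cos th) (sector th).
Proof.
  intros Hth HthP. split; [ring | split; [|split]].
  - assert (H := sin2_cos2 th). unfold Rsqr in H. lra.
  - assert (cos th < 1) by (rewrite <- cos_0; apply cos_decreasing_1; lra). lra.
  - intros z. split.
    + intros Hz. destruct (sector_polar th z Hz) as [r [phi [Hr [Hphi ->]]]].
      rewrite sdist_pol_base, sdist_pol_side.
      split; apply Rmult_lt_0_compat; auto; apply sin_gt_0; lra.
    + intros [Hb Hs]. unfold sdist in Hb. simpl in Hb.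
      rewrite Rmult_0_l, Rmult_1_l, Rplus_0_l in Hb.
      destruct (polar_upper_half z Hb) as [phi [Hphi Ez]].
      rewrite Ez in Hs |- *. rewrite sdist_pol_side in Hs.
      assert (Hr : 0 < Cmod z).
      { destruct (Rle_lt_or_eq_dec 0 (Cmod z) (Cmod_ge_0 z)) as [|H]; auto.
        rewrite <- H in Hs. lra. }
      apply sector_pol; auto. split; [lra|].
      destruct (Rlt_le_dec phi th) as [|Hle]; auto.
      assert (0 <= sin (phi - th)) by (apply sin_ge_0; lra).
      replace (th - phi) with (- (phi - th)) in Hs by ring. rewrite sin_neg in Hs. nra.
Qed.

Lemma parg_pol (r phi : R) : 0 < r -> 0 < phi < PI -> parg (pol r phi) = phi.
Proof.
  intros Hr Hp. unfold parg. rewrite Cmod_pol by lra. unfold pol, Re, Im; simpl.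
  assert (0 < r * sin phi) by (apply Rmult_lt_0_compat; auto; apply sin_gt_0; lra).
  destruct (Rle_dec 0 (r * sin phi)); [|lra].
  replace (r * cos phi / r) with (cos phi) by (field; lra). apply acos_cos. lra.
Qed.

Lemma spow_pol (al be r phi : R) : 0 < r -> 0 < phi < PI ->
  spow al be (pol r phi) = pol (Rpower r (be / al)) (be / al * phi).
Proof. intros. unfold spow. rewrite Cmod_pol, parg_pol by lra. reflexivity. Qed.

Lemma Cmod_pol_diff (r s a b : R) :
  Cmod (pol r a - pol s b) = sqrt (r * r + s * s - 2 * r * s * cos (a - b)).
Proof.
  unfold pol. rewrite Cminus_pair, Cmod_pair. f_equal. rewrite cos_minus.
  assert (H1 := sin2_cos2 a). assert (H2 := sin2_cos2 b). unfold Rsqr in *. nra.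
Qed.

Lemma w_sector_polar (th r s a b : R) : 0 < th -> th <= PI -> 0 < r -> 0 < s ->
  0 < a < th -> 0 < b < th ->
  let A := r * r + s * s - 2 * r * s * cos (a - b) in
  wG (sector th) (pol r a) (pol s b) =
  sqrt A / sqrt (A + 4 * (r * s * Rmin (sin a * sin b) (sin (th - a) * sin (th - b)))).
Proof.
  intros Hth HthP Hr Hs Ha Hb A.
  rewrite (wG_wedge 0 1 (sin th) (- cos th));
    [| apply sector_wedge; auto | apply sector_pol; auto | apply sector_pol; auto].
  rewrite Cmod_pol_diff, !sdist_pol_base, !sdist_pol_side. fold A.
  rewrite (Rmult_min_distr_l (r * s)) by nra.
  assert (Hc := COS_bound (a - b)).
  assert (0 <= A).
  { unfold A. assert (0 <= r * s * (1 - cos (a - b))) by (apply Rmult_le_pos; nra).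
    assert (Hrs := Rle_0_sqr (r - s)). unfold Rsqr in Hrs. nra. }
  rewrite sqrt_sqrt by auto.
  replace (r * sin a * (s * sin b)) with (r * s * (sin a * sin b)) by ring.
  replace (r * sin (th - a) * (s * sin (th - b))) with (r * s * (sin (th - a) * sin (th - b)))
    by ring.
  reflexivity.
Qed.

Lemma one_minus_cos (t : R) : 1 - cos t = 2 * sin (Rabs t / 2) ^ 2.
Proof.
  replace t with (2 * (t / 2)) at 1 by field. rewrite cos_2a_sin.
  unfold Rabs. destruct (Rcase_abs t); [|ring].
  replace (- t / 2) with (- (t / 2)) by field. rewrite sin_neg. ring.
Qed.

Lemma sin_prod_half (a b : R) :
  sin a * sin b = sin ((a + b) / 2) ^ 2 - sin (Rabs (a - b) / 2) ^ 2.
Proof.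
  rewrite sin_sq_diff. unfold Rabs. destruct (Rcase_abs (a - b)).
  - replace ((a + b) / 2 + - (a - b) / 2) with b by field.
    replace ((a + b) / 2 - - (a - b) / 2) with a by field. ring.
  - replace ((a + b) / 2 + (a - b) / 2) with a by field.
    replace ((a + b) / 2 - (a - b) / 2) with b by field. ring.
Qed.

(** Which side of S_theta is "nearer" for the pair (a, b) depends only on a + b:
    sin a sin b - sin (th - a) sin (th - b) = - sin th sin (th - (a + b)). *)
Lemma sin_prod_min (th a b : R) : 0 < th -> th <= PI -> 0 < a < th -> 0 < b < th ->
  Rmin (sin a * sin b) (sin (th - a) * sin (th - b)) =
  sin (Rmin ((a + b) / 2) (th - (a + b) / 2)) ^ 2 - sin (Rabs (a - b) / 2) ^ 2.
Proof.
  intros Hth HthP Ha Hb.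
  assert (Hdiff : sin a * sin b - sin (th - a) * sin (th - b) = - (sin th * sin (th - (a + b)))).
  { rewrite !sin_minus, sin_plus, cos_plus. assert (H := sin2_cos2 th). unfold Rsqr in H.
    transitivity (- (sin th * (sin th * (cos a * cos b - sin a * sin b) -
                              cos th * (sin a * cos b + cos a * sin b))) +
                  sin a * sin b * (1 - (sin th * sin th + cos th * cos th))); [ring|].
    rewrite H. ring. }
  assert (Hsth : 0 <= sin th) by (apply sin_ge_0; lra).
  destruct (Rle_lt_dec (a + b) th) as [Hab|Hab].
  - rewrite Rmin_left, Rmin_left by
      (try (assert (0 <= sin (th - (a + b))) by (apply sin_ge_0; lra)); nra).
    apply sin_prod_half.
  - rewrite Rmin_right, Rmin_right by
      (try (assert (0 <= sin (a + b - th)) by (apply sin_ge_0; lra);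
            replace (th - (a + b)) with (- (a + b - th)) in Hdiff by ring;
            rewrite sin_neg in Hdiff); nra).
    rewrite sin_prod_half.
    replace ((th - a + (th - b)) / 2) with (th - (a + b) / 2) by field.
    replace (th - a - (th - b)) with (- (a - b)) by ring. rewrite Rabs_Ropp. reflexivity.
Qed.

Lemma sinh_log_sq (r s : R) : 0 < r -> 0 < s ->
  4 * r * s * sinh ((ln r - ln s) / 2) ^ 2 = (r - s) * (r - s).
Proof.
  intros Hr Hs. unfold sinh.
  assert (E1 : exp ((ln r - ln s) / 2) * exp ((ln r - ln s) / 2) = r / s).
  { rewrite <- exp_plus.
    replace ((ln r - ln s) / 2 + (ln r - ln s) / 2) with (ln r - ln s) by field.
    unfold Rminus. rewrite exp_plus, exp_Ropp, !exp_ln; auto. }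
  assert (E2 : exp ((ln r - ln s) / 2) * exp (- ((ln r - ln s) / 2)) = 1).
  { rewrite <- exp_plus, Rplus_opp_r. apply exp_0. }
  assert (E3 : exp (- ((ln r - ln s) / 2)) * exp (- ((ln r - ln s) / 2)) = s / r).
  { rewrite <- exp_plus. replace (- ((ln r - ln s) / 2) + - ((ln r - ln s) / 2)) with (ln s - ln r)
      by field.
    unfold Rminus. rewrite exp_plus, exp_Ropp, !exp_ln; auto. }
  set (u := exp ((ln r - ln s) / 2)) in *. set (v := exp (- ((ln r - ln s) / 2))) in *.
  replace (4 * r * s * ((u - v) / 2) ^ 2) with (r * s * (u * u + v * v - 2 * (u * v))) by field.
  rewrite E1, E2, E3. field. lra.
Qed.

Lemma w_sector_hyperbolic (th r s a b : R) : 0 < th -> th <= PI -> 0 < r -> 0 < s ->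
  0 < a < th -> 0 < b < th ->
  wG (sector th) (pol r a) (pol s b) =
  wsec ((ln r - ln s) / 2) (Rabs (a - b) / 2) (Rmin ((a + b) / 2) (th - (a + b) / 2)).
Proof.
  intros Hth HthP Hr Hs Ha Hb.
  rewrite w_sector_polar, sin_prod_min by auto.
  set (x := (ln r - ln s) / 2). set (c := Rabs (a - b) / 2).
  set (e := Rmin ((a + b) / 2) (th - (a + b) / 2)).
  assert (HA : r * r + s * s - 2 * r * s * cos (a - b) = 4 * r * s * (sinh x ^ 2 + sin c ^ 2)).
  { replace (r * r + s * s - 2 * r * s * cos (a - b))
      with ((r - s) * (r - s) + 2 * (r * s) * (1 - cos (a - b))) by ring.
    rewrite <- (sinh_log_sq r s), one_minus_cos by auto. fold x c. ring. }
  assert (Hse : 0 < sin e).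
  { apply sin_gt_0; unfold e.
    - apply Rmin_glb_lt; lra.
    - apply (Rle_lt_trans _ ((a + b) / 2)); [apply Rmin_l | lra]. }
  assert (Hx : 0 <= sinh x ^ 2) by apply pow2_ge_0.
  assert (Hrs : 0 < r * s) by nra.
  rewrite HA.
  replace (4 * r * s * (sinh x ^ 2 + sin c ^ 2) + 4 * (r * s * (sin e ^ 2 - sin c ^ 2)))
    with (4 * r * s * (sinh x ^ 2 + sin e ^ 2)) by ring.
  assert (Hse2 : 0 < sin e ^ 2) by (apply pow_lt; lra).
  unfold wsec. rewrite <- sqrt_div_alt by (apply Rmult_lt_0_compat; lra).
  f_equal. field. split; lra.
Qed.

Lemma w_spow_hyperbolic (al be r s a b : R) : 0 < al -> al <= be -> be <= PI ->
  0 < r -> 0 < s -> 0 < a < al -> 0 < b < al ->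
  let k := be / al in
  let x := (ln r - ln s) / 2 in let c := Rabs (a - b) / 2 in
  let e := Rmin ((a + b) / 2) (al - (a + b) / 2) in
  wG (sector al) (pol r a) (pol s b) = wsec x c e /\
  wG (sector be) (spow al be (pol r a)) (spow al be (pol s b)) = wsec (k * x) (k * c) (k * e).
Proof.
  intros Hal Hab HbP Hr Hs Ha Hb k x c e.
  assert (Hk : 0 < k) by (apply Rdiv_lt_0_compat; lra).
  assert (Hkal : k * al = be) by (unfold k; field; lra).
  split; [apply w_sector_hyperbolic; auto; lra|].
  rewrite !spow_pol by lra. fold k.
  rewrite w_sector_hyperbolic by (try apply exp_pos; try split; nra).
  unfold Rpower. rewrite !ln_exp.
  f_equal.
  - unfold x. field.
  - unfold c. replace (k * a - k * b) with (k * (a - b)) by ring.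
    rewrite Rabs_mult, (Rabs_right k) by lra. field.
  - unfold e. rewrite Rmult_min_distr_l by lra. rewrite <- Hkal. f_equal; field.
Qed.

Lemma w_spow_bounds (al be : R) (x y : C) : 0 < al -> al <= be -> be <= PI ->
  sector al x -> sector al y ->
  wG (sector al) x y <= wG (sector be) (spow al be x) (spow al be y) /\
  wG (sector be) (spow al be x) (spow al be y) <=
    be * sin (al / 2) / (al * sin (be / 2)) * wG (sector al) x y.
Proof.
  intros Hal Hab HbP Hx Hy.
  destruct (sector_polar al x Hx) as [r [a [Hr [Ha ->]]]].
  destruct (sector_polar al y Hy) as [s [b [Hs [Hb ->]]]].
  destruct (w_spow_hyperbolic al be r s a b) as [-> ->]; auto.
  set (k := be / al).
  assert (Hk : 1 <= k) by (unfold k; apply (Rmult_le_reg_r al); auto; field_simplify; lra).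
  assert (Hkal : k * al = be) by (unfold k; field; lra).
  replace (be * sin (al / 2) / (al * sin (be / 2))) with (k * sin (al / 2) / sin (k * (al / 2))).
  - apply wsec_scale_bounds with (al := al); try lra.
    + apply Rmult_le_pos; [apply Rabs_pos | lra].
    + unfold Rabs. apply Rmin_glb; destruct (Rcase_abs (a - b)); lra.
    + apply Rmin_glb_lt; lra.
    + unfold Rmin. destruct (Rle_dec ((a + b) / 2) (al - (a + b) / 2)); lra.
  - replace (k * (al / 2)) with (be / 2) by (rewrite <- Hkal; field).
    assert (0 < sin (be / 2)) by (apply sin_gt_0; lra).
    unfold k. field. lra.
Qed.

Lemma sinh_ge_id (t : R) : 0 <= t -> t <= sinh t.
Proof.
  intros Ht. enough (sinh 0 - 0 <= sinh t - t) by (rewrite sinh_0 in *; lra).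
  apply (le_of_nonneg_derive (fun u => sinh u - u) (fun u => cosh u - 1)); [lra| |].
  - intros u _. unfold sinh, cosh. auto_derive; [auto | field].
  - intros u Hu. assert (H := cosh_le 0 u ltac:(lra) ltac:(lra)). rewrite cosh_0 in H. lra.
Qed.

(** w never exceeds 1: tilde points are at least as far as the points themselves. *)
Lemma wsec_le_1 (x c e : R) : sin e <> 0 -> sin c ^ 2 <= sin e ^ 2 -> wsec x c e <= 1.
Proof.
  intros He Hce. unfold wsec. rewrite <- sqrt_1. apply sqrt_le_1_alt.
  assert (0 < sin e ^ 2) by (apply pow2_gt_0; auto).
  assert (0 <= sinh x ^ 2) by apply pow2_ge_0.
  apply (Rmult_le_reg_r (sinh x ^ 2 + sin e ^ 2)); [lra|].
  field_simplify; lra.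
Qed.

Lemma wsec_near_1 (c : R) : 1 < c -> exists t, forall e, 1 < c * wsec t 0 e.
Proof.
  intros Hc. set (u := c * c - 1). assert (Hu : 0 < u) by (unfold u; nra).
  exists (1 + / u). intros e.
  assert (Ht : 1 <= 1 + / u) by (assert (0 < / u) by (apply Rinv_0_lt_compat; lra); lra).
  assert (Hsh := sinh_ge_id (1 + / u) ltac:(lra)).
  set (p := sinh (1 + / u) ^ 2).
  assert (Hp : 1 + / u <= p) by (unfold p; nra).
  assert (Hup : 1 < u * p).
  { assert (u * (1 + / u) <= u * p) by (apply Rmult_le_compat_l; lra).
    replace (u * (1 + / u)) with (u + 1) in * by (field; lra). lra. }
  assert (Hs := SIN_bound e). assert (Hs2 : sin e ^ 2 <= 1) by nra.
  assert (0 <= sin e ^ 2) by apply pow2_ge_0.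
  unfold wsec. rewrite sin_0. fold p. replace (0 ^ 2) with 0 by ring. rewrite !Rplus_0_r.
  rewrite <- (sqrt_square c) at 1 by lra. rewrite <- sqrt_mult_alt by nra.
  rewrite <- sqrt_1. apply sqrt_lt_1_alt. split; [lra|].
  apply (Rmult_lt_reg_r (p + sin e ^ 2)); [lra|].
  field_simplify; [|lra]. unfold u in Hup. nra.
Qed.

Lemma wsec_zero (c e : R) : 0 <= sin c -> 0 < sin e -> wsec 0 c e = sin c / sin e.
Proof.
  intros Hc He. unfold wsec. rewrite sinh_0.
  replace ((0 ^ 2 + sin c ^ 2) / (0 ^ 2 + sin e ^ 2)) with ((sin c / sin e) * (sin c / sin e))
    by (field; lra).
  apply sqrt_square. apply Rdiv_le_0_compat; lra.
Qed.

Lemma cos_ge_quadratic (t : R) : 0 <= t -> t <= PI -> 1 - t ^ 2 / 2 <= cos t.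
Proof.
  intros Ht HtP. replace t with (2 * (t / 2)) at 2 by field. rewrite cos_2a_sin.
  assert (Hs0 : 0 <= sin (t / 2)) by (apply sin_ge_0; lra).
  assert (Hs : sin (t / 2) <= t / 2).
  { destruct Ht as [Ht| <-]; [left; apply sin_lt_x; lra|].
    replace (0 / 2) with 0 by field. rewrite sin_0. lra. }
  assert (sin (t / 2) * sin (t / 2) <= t / 2 * (t / 2)) by (apply Rmult_le_compat; lra).
  replace (t ^ 2) with (t * t) by ring. lra.
Qed.

Lemma sin_scale_near_0 (k g delta : R) : 0 < k -> g < k -> 0 < delta -> delta <= PI ->
  exists d, 0 < d < delta /\ g * sin d < sin (k * d).
Proof.
  intros Hk Hg Hdelta HdeltaP. assert (HPI := PI2_1).
  set (h := Rmax 0 (g / k)).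
  assert (Hh0 : 0 <= h) by apply Rmax_l.
  assert (Hh1 : h < 1).
  { apply Rmax_lub_lt; [lra|]. apply (Rmult_lt_reg_r k); auto. field_simplify; lra. }
  set (t := Rmin (1 - h) (k * delta / 2)).
  assert (Ht0 : 0 < t) by (apply Rmin_glb_lt; nra).
  assert (Ht1 : t <= 1 - h) by apply Rmin_l.
  assert (Ht2 : t <= k * delta / 2) by apply Rmin_r.
  assert (Htk0 : 0 < t / k) by (apply Rdiv_lt_0_compat; lra).
  assert (Htk : t / k <= delta / 2).
  { apply (Rmult_le_reg_l k); auto. replace (k * (t / k)) with t by (field; lra). lra. }
  exists (t / k). split; [lra|].
  - replace (k * (t / k)) with t by (field; lra).
    assert (Htcos := sin_ge_tcos t ltac:(lra) ltac:(lra)).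
    assert (Hcos := cos_ge_quadratic t ltac:(lra) ltac:(lra)).
    assert (Hst : 0 <= sin t) by (apply sin_ge_0; lra).
    assert (Hsin : t * (1 - t ^ 2 / 2) <= sin t).
    { assert (t * (1 - t ^ 2 / 2) <= t * cos t) by (apply Rmult_le_compat_l; lra).
      assert (0 <= sin t ^ 3) by (apply pow_le; lra). lra. }
    assert (Hht : h * t < t * (1 - t ^ 2 / 2)).
    { assert (t * t <= t * (1 - h)) by (apply Rmult_le_compat_l; lra). nra. }
    assert (Hsd : 0 < sin (t / k)) by (apply sin_gt_0; lra).
    assert (Hgs : g * sin (t / k) <= h * t).
    { destruct (Rle_lt_dec g 0) as [Hg0|Hg0].
      - assert (g * sin (t / k) <= 0) by nra. nra.
      - assert (Hh : h = g / k) by (unfold h; rewrite Rmax_right; [reflexivity|];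
          apply Rlt_le, Rdiv_lt_0_compat; lra).
        assert (sin (t / k) < t / k) by (apply sin_lt_x; lra).
        rewrite Hh. replace (g / k * t) with (g * (t / k)) by (field; lra). nra. }
    lra.
Qed.

Lemma lower_bound_sharp (al be c : R) : 0 < al -> al <= be -> be <= PI -> 1 < c ->
  exists x y : C, sector al x /\ sector al y /\
    wG (sector be) (spow al be x) (spow al be y) < c * wG (sector al) x y.
Proof.
  intros Hal Hab HbP Hc. destruct (wsec_near_1 c Hc) as [t Ht].
  exists (pol (exp (2 * t)) (al / 2)), (pol 1 (al / 2)).
  split; [apply sector_pol; [apply exp_pos | lra]|].
  split; [apply sector_pol; lra|].
  destruct (w_spow_hyperbolic al be (exp (2 * t)) 1 (al / 2) (al / 2)) as [-> ->];
    try apply exp_pos; try lra.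
  rewrite ln_exp, ln_1, Rminus_diag, Rabs_R0.
  replace ((2 * t - 0) / 2) with t by field. replace (0 / 2) with 0 by field.
  replace (Rmin ((al / 2 + al / 2) / 2) (al - (al / 2 + al / 2) / 2)) with (al / 2)
    by (rewrite Rmin_left; field_simplify; lra).
  apply (Rle_lt_trans _ 1); [|apply Ht].
  apply wsec_le_1.
  - replace (be / al * (al / 2)) with (be / 2) by (field; lra).
    apply Rgt_not_eq, sin_gt_0; lra.
  - rewrite Rmult_0_r, sin_0. replace (0 ^ 2) with 0 by ring. apply pow2_ge_0.
Qed.

Lemma upper_bound_sharp (al be c : R) : 0 < al -> al <= be -> be <= PI ->
  c < be * sin (al / 2) / (al * sin (be / 2)) ->
  exists x y : C, sector al x /\ sector al y /\
    c * wG (sector al) x y < wG (sector be) (spow al be x) (spow al be y).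
Proof.
  intros Hal Hab HbP Hc. set (k := be / al).
  assert (Hk : 1 <= k) by (unfold k; apply (Rmult_le_reg_r al); auto; field_simplify; lra).
  assert (Hkal : k * al = be) by (unfold k; field; lra).
  assert (Hsa : 0 < sin (al / 2)) by (apply sin_gt_0; lra).
  assert (Hsb : 0 < sin (be / 2)) by (apply sin_gt_0; lra).
  set (g := c * sin (be / 2) / sin (al / 2)).
  assert (Hg : g < k).
  { unfold g. apply (Rmult_lt_reg_r (sin (al / 2) / sin (be / 2))); [apply Rdiv_lt_0_compat; lra|].
    replace (c * sin (be / 2) / sin (al / 2) * (sin (al / 2) / sin (be / 2))) with c
      by (field; lra).
    replace (k * (sin (al / 2) / sin (be / 2))) with (be * sin (al / 2) / (al * sin (be / 2)))
      by (unfold k; field; lra).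
    exact Hc. }
  destruct (sin_scale_near_0 k g (al / 4) ltac:(lra) Hg ltac:(lra) ltac:(lra)) as [d [Hd Hgd]].
  exists (pol 1 (al / 2 + d)), (pol 1 (al / 2 - d)).
  split; [apply sector_pol; lra|]. split; [apply sector_pol; lra|].
  destruct (w_spow_hyperbolic al be 1 1 (al / 2 + d) (al / 2 - d)) as [-> ->]; try lra.
  fold k. rewrite Rminus_diag. replace (0 / 2) with 0 by field. rewrite Rmult_0_r.
  replace (Rabs (al / 2 + d - (al / 2 - d)) / 2) with d
    by (rewrite Rabs_right by lra; field).
  replace (Rmin ((al / 2 + d + (al / 2 - d)) / 2) (al - (al / 2 + d + (al / 2 - d)) / 2))
    with (al / 2)
    by (rewrite Rmin_left; field_simplify; lra).
  replace (k * (al / 2)) with (be / 2) by (rewrite <- Hkal; field).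
  assert (Hsd : 0 < sin d) by (apply sin_gt_0; lra).
  assert (Hskd : 0 < sin (k * d)) by (apply sin_gt_0; nra).
  rewrite !wsec_zero by lra.
  apply (Rmult_lt_reg_r (sin (be / 2))); [lra|].
  replace (c * (sin d / sin (al / 2)) * sin (be / 2)) with (g * sin d) by (unfold g; field; lra).
  replace (sin (k * d) / sin (be / 2) * sin (be / 2)) with (sin (k * d)) by (field; lra).
  exact Hgd.
Qed.

Theorem lemma5p8 (alpha beta : R) :
  0 < alpha -> alpha <= beta -> beta <= PI ->
  let f := spow alpha beta in
  let K := beta * sin (alpha / 2) / (alpha * sin (beta / 2)) in
  (forall x y : C, sector alpha x -> sector alpha y ->
     wG (sector alpha) x y <= wG (sector beta) (f x) (f y) /\
     wG (sector beta) (f x) (f y) <= K * wG (sector alpha) x y) /\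
  (forall c : R, 1 < c -> exists x y : C, sector alpha x /\ sector alpha y /\
     wG (sector beta) (f x) (f y) < c * wG (sector alpha) x y) /\
  (forall c : R, c < K -> exists x y : C, sector alpha x /\ sector alpha y /\
     c * wG (sector alpha) x y < wG (sector beta) (f x) (f y)).
Proof.
  intros Hal Hab HbP f K. split; [|split].
  - intros x y Hx Hy. now apply w_spow_bounds.
  - intros c Hc. now apply lower_bound_sharp.
  - intros c Hc. now apply upper_bound_sharp.
Qed.
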